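(* Let $r_0>0$, $\eta>0$, and let $C_0\subset\mathbb{R}^2$ be the circle of radius $r_0$ centered at the origin, taken as the data set. For $r>0$ let $C_r$ be the circle of radius $r$ centered at the origin, and for $s\in\{1,2\}$ consider $$E_s(C_r)=\left(\int_{C_r} d(\mathbf{x})^{s}\, d\sigma\right)^{1/s}+\eta \left(\int_{C_r} |\kappa(\mathbf{x})|^{s}\,d\sigma\right)^{1/s}=(2\pi)^{1/s}\left(|r-r_0|\,r^{1/s}+\eta\, r^{1/s-1}\right),$$ where $d(\mathbf{x})$ is the distance from $\mathbf{x}$ to $C_0$ (so $d=|r-r_0|$ on $C_r$) and $\kappa=1/r$ is the curvature of $C_r$. Then, viewing $E_s(C_r)$ as a function of $r>0$: (i) for $s=1$, $r=r_0$ is a local minimizer of $E_1(C_r)$ for every $\eta>0$; (ii) for $s=2$, $r=r_0$ is a local minimizer of $E_2(C_r)$ if $\eta\le 2r_0^2$, and $r=\big(r_0+\sqrt{r_0^2+12\eta}\big)/6$ is a local minimizer of $E_2(C_r)$ if $\eta>2r_0^2$.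
   Context: $d\sigma$ denotes arc length on the circle. The energy is the paper's curvature-regularized reconstruction energy $E_s(\Gamma)=(\int_\Gamma |d|^s d\sigma)^{1/s}+\eta(\int_\Gamma|\kappa|^s d\sigma)^{1/s}$ restricted to circles concentric with the data circle. *)

From Stdlib Require Import Reals Lra.
From Coquelicot Require Import Coquelicot.
Open Scope R_scope.

Definition norm2 (x : R * R) : R := sqrt (fst x ^ 2 + snd x ^ 2).

Definition dist_C0 (r0 : R) (x : R * R) : R := Rabs (norm2 x - r0).

Definition gamma (r t : R) : R * R := (r * cos t, r * sin t).
Definition speed (r t : R) : R :=
  sqrt ((Derive (fun u => r * cos u) t) ^ 2 + (Derive (fun u => r * sin u) t) ^ 2).

Definition circ_integral (r : R) (f : R * R -> R) : R :=
  RInt (fun t => f (gamma r t) * speed r t) 0 (2 * PI).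

Definition curv_circle (r : R) (x : R * R) : R := / r.

Definition sroot (s : nat) (y : R) : R :=
  if Rle_dec y 0 then 0 else Rpower y (/ INR s).

Definition E_s (s : nat) (eta r0 r : R) : R :=
  sroot s (circ_integral r (fun x => Rabs (dist_C0 r0 x) ^ s))
  + eta * sroot s (circ_integral r (fun x => Rabs (curv_circle r x) ^ s)).

Definition local_minimizer_pos (g : R -> R) (rs : R) : Prop :=
  0 < rs /\ exists delta, 0 < delta /\
    forall r, 0 < r -> Rabs (r - rs) < delta -> g rs <= g r.

(** On the circle C_r every integrand of E_s is constant, so E_s(C_r) = (2 pi r)^(1/s) (|r - r0| + eta / r).
    For s = 1 this is 2 pi (r |r - r0| + eta), minimal at r = r0. For s = 2, substituting u = sqrt r gives
    the profile |u^2 - r0| u + eta / u, whose comparison with its value at the candidate minimizer reduces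
    to the sign of an explicit polynomial factorization. *)
From Stdlib Require Import Reals Lra Psatz.
From Coquelicot Require Import Coquelicot.
Open Scope R_scope.

Lemma sqrt_sum_sqr_cos_sin (r t : R) : sqrt ((r * cos t) ^ 2 + (r * sin t) ^ 2) = Rabs r.
Proof.
  replace ((r * cos t) ^ 2 + (r * sin t) ^ 2) with (r² * (sin t ^ 2 + cos t ^ 2))
    by (unfold Rsqr; ring).
  rewrite <- !Rsqr_pow2, sin2_cos2, Rmult_1_r.
  apply sqrt_Rsqr_abs.
Qed.

Lemma norm2_gamma (r t : R) : norm2 (gamma r t) = Rabs r.
Proof. apply sqrt_sum_sqr_cos_sin. Qed.

Lemma speed_circle (r t : R) : speed r t = Rabs r.
Proof.
  unfold speed.
  replace (Derive (fun u => r * cos u) t) with (- r * sin t)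
    by (symmetry; apply is_derive_unique; auto_derive; auto; ring).
  replace (Derive (fun u => r * sin u) t) with (r * cos t)
    by (symmetry; apply is_derive_unique; auto_derive; auto; ring).
  rewrite <- (sqrt_sum_sqr_cos_sin r t); f_equal; ring.
Qed.

Lemma circ_integral_const (r c : R) (f : R * R -> R) :
  (forall t, f (gamma r t) = c) -> circ_integral r f = c * (2 * PI * Rabs r).
Proof.
  intros Hf; unfold circ_integral.
  rewrite (RInt_ext _ (fun _ => c * Rabs r)).
  - rewrite RInt_const; unfold scal; simpl; unfold mult; simpl; ring.
  - intros t _; rewrite Hf, speed_circle; reflexivity.
Qed.

Lemma sroot_pow_mul (s : nat) (c m : R) : (0 < s)%nat -> 0 <= c -> 0 < m ->
  sroot s (c ^ s * m) = c * Rpower m (/ INR s).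
Proof.
  intros Hs Hc Hm; unfold sroot.
  destruct (Rle_dec (c ^ s * m) 0) as [Hle | Hgt].
  - destruct Hc as [Hc | <-]; [|ring].
    pose proof (pow_lt c s Hc); nra.
  - destruct Hc as [Hc | <-]; [|rewrite pow_ne_zero in Hgt by lia; lra].
    assert (Hs' : INR s <> 0) by (apply not_0_INR; lia).
    rewrite <- Rpower_mult_distr by (try apply pow_lt; assumption).
    rewrite <- Rpower_pow, Rpower_mult, Rinv_r, Rpower_1 by assumption.
    reflexivity.
Qed.

Lemma E_s_circle (s : nat) (eta r0 r : R) : (0 < s)%nat -> 0 < r ->
  E_s s eta r0 r = Rpower (2 * PI * r) (/ INR s) * (Rabs (r - r0) + eta / r).
Proof.
  intros Hs Hr; pose proof PI_RGT_0.
  unfold E_s.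
  rewrite (circ_integral_const r (Rabs (r - r0) ^ s)), (circ_integral_const r ((/ r) ^ s)).
  - rewrite (Rabs_pos_eq r), !sroot_pow_mul by
      (auto; try apply Rabs_pos; try apply Rlt_le, Rinv_0_lt_compat; nra).
    unfold Rdiv; ring.
  - intros t; unfold curv_circle; rewrite Rabs_pos_eq; [reflexivity|].
    apply Rlt_le, Rinv_0_lt_compat, Hr.
  - intros t; unfold dist_C0; rewrite norm2_gamma, Rabs_Rabsolu, (Rabs_pos_eq r) by lra.
    reflexivity.
Qed.

Lemma E_s1_circle (eta r0 r : R) : 0 < r ->
  E_s 1 eta r0 r = 2 * PI * (r * Rabs (r - r0) + eta).
Proof.
  intros Hr; pose proof PI_RGT_0.
  rewrite E_s_circle by (auto; lia).
  replace (/ INR 1) with 1 by (simpl; field).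
  rewrite Rpower_1 by nra; field; lra.
Qed.

Definition profile2 (r0 eta u : R) : R := Rabs (u ^ 2 - r0) * u + eta / u.

Lemma E_s2_circle (eta r0 r : R) : 0 < r ->
  E_s 2 eta r0 r = sqrt (2 * PI) * profile2 r0 eta (sqrt r).
Proof.
  intros Hr; pose proof PI_RGT_0.
  assert (Hu : 0 < sqrt r) by (apply sqrt_lt_R0, Hr).
  rewrite E_s_circle by (auto; lia).
  replace (/ INR 2) with (/ 2) by (simpl; field).
  rewrite Rpower_sqrt, sqrt_mult_alt by nra.
  unfold profile2; rewrite pow2_sqrt by lra.
  replace r with (sqrt r * sqrt r) at 3 by (apply sqrt_sqrt; lra).
  field; lra.
Qed.

Lemma profile2_min_at_data (r0 eta u : R) : 0 < r0 -> 0 < u -> 0 < eta ->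
  eta <= 2 * r0 ^ 2 -> profile2 r0 eta (sqrt r0) <= profile2 r0 eta u.
Proof.
  intros Hr0 Hu Heta Hle; unfold profile2.
  set (a := sqrt r0).
  assert (Ha : 0 < a) by (apply sqrt_lt_R0, Hr0).
  assert (Hr0a : r0 = a ^ 2) by (symmetry; apply pow2_sqrt; lra).
  rewrite Hr0a in *; rewrite Rminus_diag, Rabs_R0, Rmult_0_l, Rplus_0_l.
  destruct (Rle_lt_dec a u) as [Hau | Hua].
  - (* the gain over eta / a factors as (u - a) (u^2 a (u + a) - eta) / (u a) *)
    rewrite Rabs_pos_eq by nra.
    assert (Hgap : u ^ 2 * a * (u + a) >= 2 * (a ^ 2) ^ 2).
    { assert (u ^ 2 >= a ^ 2) by nra.
      assert (u ^ 2 * a >= a ^ 2 * a) by nra; nra. }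
    assert (0 <= (u - a) * (u ^ 2 * a * (u + a) - eta) / (u * a)).
    { apply Rmult_le_pos; [nra | apply Rlt_le, Rinv_0_lt_compat; nra]. }
    replace ((u ^ 2 - a ^ 2) * u + eta / u)
      with (eta / a + (u - a) * (u ^ 2 * a * (u + a) - eta) / (u * a))
      by (field; lra).
    lra.
  - assert (eta / a <= eta / u).
    { apply Rmult_le_compat_l; [lra | apply Rinv_le_contravar; lra]. }
    pose proof (Rabs_pos (u ^ 2 - a ^ 2)); nra.
Qed.

Lemma profile2_min_at_critical (r0 eta a u : R) : 0 < a -> 0 < u ->
  r0 < a ^ 2 -> r0 < u ^ 2 -> eta = 3 * (a ^ 2) ^ 2 - a ^ 2 * r0 ->
  profile2 r0 eta a <= profile2 r0 eta u.
Proof.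
  intros Ha Hu Hra Hru Heta; unfold profile2.
  rewrite !Rabs_pos_eq by lra.
  (* a is a double root of the gain, which is (u - a)^2 (u^2 + 2 a u + 3 a^2 - r0) / u *)
  assert (0 <= (u - a) ^ 2 * (u ^ 2 + 2 * a * u + 3 * a ^ 2 - r0) / u).
  { apply Rmult_le_pos; [apply Rmult_le_pos; [apply pow2_ge_0 | nra]|].
    apply Rlt_le, Rinv_0_lt_compat, Hu. }
  replace ((u ^ 2 - r0) * u + eta / u)
    with ((a ^ 2 - r0) * a + eta / a + (u - a) ^ 2 * (u ^ 2 + 2 * a * u + 3 * a ^ 2 - r0) / u)
    by (subst eta; field; lra).
  lra.
Qed.

(* The critical radius is the positive root of 3 r^2 - r0 r - eta, the numerator of d/dr (sqrt r (r - r0 + eta / r)). *)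
Lemma critical_radius_root (r0 eta : R) : 0 <= eta ->
  let rs := (r0 + sqrt (r0 ^ 2 + 12 * eta)) / 6 in eta = 3 * rs ^ 2 - rs * r0.
Proof.
  intros Heta rs.
  assert (HS : sqrt (r0 ^ 2 + 12 * eta) ^ 2 = r0 ^ 2 + 12 * eta)
    by (apply pow2_sqrt; nra).
  unfold rs; nra.
Qed.

Lemma critical_radius_gt (r0 eta : R) : 0 < r0 -> 2 * r0 ^ 2 < eta ->
  r0 < (r0 + sqrt (r0 ^ 2 + 12 * eta)) / 6.
Proof.
  intros Hr0 Heta.
  assert (5 * r0 < sqrt (r0 ^ 2 + 12 * eta)); [|lra].
  rewrite <- (sqrt_pow2 (5 * r0)) by lra.
  apply sqrt_lt_1_alt; nra.
Qed.

Lemma local_minimizer_pos_of_le (g : R -> R) (rs : R) : 0 < rs ->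
  (forall r, 0 < r -> g rs <= g r) -> local_minimizer_pos g rs.
Proof.
  intros Hrs Hmin; split; [exact Hrs|].
  exists 1; split; [lra|]; auto.
Qed.

Theorem proposition2 (r0 eta : R) (Hr0 : 0 < r0) (Heta : 0 < eta) :
  local_minimizer_pos (E_s 1 eta r0) r0 /\
  (eta <= 2 * r0 ^ 2 -> local_minimizer_pos (E_s 2 eta r0) r0) /\
  (eta > 2 * r0 ^ 2 ->
     local_minimizer_pos (E_s 2 eta r0) ((r0 + sqrt (r0 ^ 2 + 12 * eta)) / 6)).
Proof.
  pose proof PI_RGT_0.
  assert (Hc : 0 <= sqrt (2 * PI)) by apply sqrt_pos.
  split; [|split].
  - apply local_minimizer_pos_of_le; [exact Hr0|]; intros r Hr.
    rewrite !E_s1_circle, Rminus_diag, Rabs_R0 by assumption.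
    apply Rmult_le_compat_l; [lra|].
    pose proof (Rabs_pos (r - r0)); nra.
  - intros Hle; apply local_minimizer_pos_of_le; [exact Hr0|]; intros r Hr.
    rewrite !E_s2_circle by assumption.
    apply Rmult_le_compat_l; [exact Hc|].
    apply profile2_min_at_data; auto; apply sqrt_lt_R0, Hr.
  - intros Hgt.
    pose proof (critical_radius_root r0 eta (Rlt_le _ _ Heta)) as Hroot.
    pose proof (critical_radius_gt r0 eta Hr0 Hgt) as Hrs.
    set (rs := (r0 + sqrt (r0 ^ 2 + 12 * eta)) / 6) in *.
    split; [lra|]; exists (rs - r0); split; [lra|]; intros r Hr Hd.
    assert (Hrr : r0 < r) by (apply Rabs_def2 in Hd; lra).
    rewrite !E_s2_circle by lra.
    apply Rmult_le_compat_l; [exact Hc|].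
    apply profile2_min_at_critical; try (apply sqrt_lt_R0; lra);
      rewrite ?pow2_sqrt by lra; assumption.
Qed.
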